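(* Let $E$ be a Boolean algebra of propositions, $E_0=E\setminus\{0\}$, let $T$ be a commutative algebra with identity over $\mathbb{R}$ containing $\mathbb{R}$ (an algebra of unknown real numbers), and let $PV:T\times E_0\to\mathbb{R}$ be a plausible value function satisfying: (a) for all $a,b\in\mathbb{R}$, $X\in T$, $C\in E_0$: $PV(aX+b|C)=aPV(X|C)+b$; (b) for each fixed $Y\in T$ and $A\in E_0$, the value $PV(X+Y|A)$ depends only on $PV(X|A)$ (i.e. $PV(X|A)=PV(X'|A)$ implies $PV(X+Y|A)=PV(X'+Y|A)$). Then for all $X,Y\in T$ and $A\in E_0$, $$PV(X+Y|A)=PV(X|A)+PV(Y|A).$$ *)

From HB Require Import structures.
From mathcomp Require Import all_boot all_order all_algebra.
From mathcomp Require Import reals.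
Set Implicit Arguments. Unset Strict Implicit. Unset Printing Implicit Defensive.

From HB Require Import structures.
From mathcomp Require Import all_boot all_order all_algebra.
From mathcomp Require Import reals.
Import Order.TTheory GRing.Theory Num.Theory.
Local Open Scope ring_scope.

(* Affinity on constants gives PV(X|A)%:A the same plausible value as X, so by
   (b) PV(X + Y|A) = PV(PV(X|A) + Y|A), and affinity on translates evaluates the
   right-hand side to PV(X|A) + PV(Y|A). *)

Section AffineCongruentFunctional.

Variables (R : pzRingType) (T : lalgType R) (f : T -> R).

Hypothesis f_affine : forall (a b : R) (X : T), f (a *: X + b%:A) = a * f X + b.
Hypothesis f_congr_add :
  forall Y X X' : T, f X = f X' -> f (X + Y) = f (X' + Y).

Lemma affine_scalar (b : R) : f b%:A = b.
Proof. by have := f_affine 0 b 0; rewrite scale0r add0r mul0r add0r. Qed.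

Lemma affine_addr_scalar (b : R) (Y : T) : f (Y + b%:A) = f Y + b.
Proof. by have := f_affine 1 b Y; rewrite scale1r mul1r. Qed.

Lemma affine_congr_additive (X Y : T) : f (X + Y) = f X + f Y.
Proof.
rewrite (f_congr_add Y X (f X)%:A (esym (affine_scalar _))).
by rewrite addrC affine_addr_scalar addrC.
Qed.

End AffineCongruentFunctional.

Theorem mainTheorem4 (R : realType) (d : Order.disp_t)
  (E : ctbDistrLatticeType d) (T : comAlgType R) (PV : T -> E -> R)
  (Ha : forall (a b : R) (X : T) (C : E), C != \bot%O ->
          PV (a *: X + b%:A) C = a * PV X C + b)
  (Hb : forall (Y : T) (A : E) (X X' : T), A != \bot%O ->
          PV X A = PV X' A -> PV (X + Y) A = PV (X' + Y) A) :
  forall (X Y : T) (A : E), A != \bot%O -> PV (X + Y) A = PV X A + PV Y A.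
Proof.
move=> X Y A hA.
apply: (@affine_congr_additive _ _ (PV^~ A)) => [a b Z|Z Z1 Z2].
- exact: Ha.
- exact: Hb.
Qed.
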